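(* Let $n\geqslant 2$ and $c\geqslant 1$ be integers and let $\Gamma$ be an abelian group of order $2nc$. A diagonal $\mathrm{MRS}_\Gamma(n;2;c)$ exists if and only if $\Gamma$ contains an element of order $n$.
   Context: For positive integers $m,n,s,k,c$ and an abelian group $\Gamma$ of order $nkc$, an $\mathrm{MRS}_\Gamma(m,n;s,k;c)$ is a set of $c$ partially filled $m\times n$ arrays (some cells may be empty) with entries in $\Gamma$ such that: every element of $\Gamma$ appears exactly once and in a unique array; in every array each row contains exactly $s$ filled cells and each column contains exactly $k$ filled cells; and there exist $\omega,\delta\in\Gamma$ such that in every array each row sum is $\omega$ and each column sum is $\delta$. $\mathrm{MRS}_\Gamma(n;k;c)$ denotes $\mathrm{MRS}_\Gamma(n,n;k,k;c)$. In an $n\times n$ array, for $0\leqslant \ell\leqslant n-1$ the diagonal $D_\ell$ is the set of cells $(i,j)$ with $j-i\equiv \ell\pmod n$. An $\mathrm{MRS}_\Gamma(n;k;c)$ is diagonal if, in each of its arrays, the filled cells are exactly the cells of $k$ consecutive diagonals $D_{t},D_{t+1},\ldots,D_{t+k-1}$ (indices modulo $n$). *)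

From HB Require Import structures.
From mathcomp Require Import all_boot all_order all_algebra all_fingroup.
Set Implicit Arguments. Unset Strict Implicit. Unset Printing Implicit Defensive.
Import GRing.Theory.
Local Open Scope ring_scope.

(* A family of c partially filled n x n arrays with entries in G:
   A a i j = None  : cell (i,j) of array a is empty,
   A a i j = Some g: cell (i,j) of array a contains g. *)
Definition arrays (G : Type) (m n c : nat) := 'I_c -> 'I_m -> 'I_n -> option G.

Definition is_MRS (G : finZmodType) (m n s k c : nat) (A : arrays G m n c) : Prop :=
  (forall g : G, #|[set x : 'I_c * 'I_m * 'I_n | A x.1.1 x.1.2 x.2 == Some g]| = 1%N)
  /\ (forall a i, #|[set j | A a i j != None]| = s)
  /\ (forall a j, #|[set i | A a i j != None]| = k)
  /\ exists omega delta : G,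
       (forall a i, \sum_(j < n) odflt 0 (A a i j) = omega)
    /\ (forall a j, \sum_(i < m) odflt 0 (A a i j) = delta).

Definition is_MRS_sq (G : finZmodType) (n k c : nat) (A : arrays G n n c) : Prop :=
  @is_MRS G n n k k c A.

Definition on_diag (n : nat) (i j : 'I_n) (l : nat) : bool :=
  ((j + n - i) %% n == l %% n)%N.

Definition is_diagonal (G : Type) (n k c : nat) (A : arrays G n n c) : Prop :=
  forall a : 'I_c, exists t : 'I_n, forall i j : 'I_n,
    isSome (A a i j) = [exists s : 'I_k, on_diag i j (t + s)].

From mathcomp Require Import all_boot all_order all_algebra all_fingroup all_solvable.
Set Implicit Arguments. Unset Strict Implicit. Unset Printing Implicit Defensive.
Import GRing.Theory FinRing.Theory.
Local Open Scope ring_scope.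

(* Take one array of a diagonal MRS, filled on the diagonals D_t and D_(t+1),
   and let X_i be its entry in row i on D_t.  Row i gives X_i + Y_i = omega and
   the column through (i, i+t+1) gives Y_i + X_(i+1) = delta, hence
   X_(i+1) = X_i + (delta - omega).  The X_i are pairwise distinct and
   X_(i+n) = X_i, so delta - omega has order exactly n.

   Conversely let d have order n and H = <d>.  The quotient G/H has even
   order 2c, so it contains an involution and hence a coset w + H containing no
   double 2z.  The involution C |-> w - C of G/H is then fixed-point free, so
   the blocks (x + H) u (w - x + H) have 2n elements and G is the disjoint
   union of c of them, with representatives x_1, ..., x_c.  Array a carries
   x_a + i d in cell (i, i) and w - x_a - i d in cell (i, i+1): its rows sum
   to w and its columns to w + d. *)

Lemma order_zmodP (G : finZmodType) (e : G) n : (0 < n)%N ->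
  #[e]%g = n <-> e *+ n = 0 /\ injective (fun k : 'I_n => e *+ k).
Proof.
move=> n_gt0; split=> [<- | [en e_inj]].
  split=> [|i j /eqP]; first by rewrite -zmodXgE expg_order.
  by rewrite -!zmodXgE eq_expg_mod_order !modn_small // => /eqP/val_inj.
have e_dvd : (#[e]%g %| n)%N by rewrite order_dvdn zmodXgE en.
apply/eqP; rewrite eqn_leq dvdn_leq //= leqNgt; apply/negP => lt_e_n.
have := e_inj (Ordinal lt_e_n) (Ordinal n_gt0).
rewrite /= -zmodXgE expg_order mulr0n => /(_ erefl)/(congr1 val)/= e0.
by move: (order_gt0 e); rewrite e0.
Qed.

Lemma rcoset_zmodE (G : finZmodType) (H : {group G}) x y : (y \in H :* x)%g = (y - x \in H).
Proof. exact: mem_rcoset. Qed.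

Lemma groupN_zmod (G : finZmodType) (H : {group G}) x : (- x \in H) = (x \in H).
Proof. exact: groupV. Qed.

Lemma groupD_zmod (G : finZmodType) (H : {group G}) x y : x \in H -> y \in H -> x + y \in H.
Proof. exact: groupM. Qed.

Lemma mulrn_cycle (G : finZmodType) (d : G) k : d *+ k \in <[d]>%g.
Proof. by rewrite -zmodXgE mem_cycle. Qed.

Lemma mulrn_ordS (G : finZmodType) (d : G) n' (i : 'I_n'.+2) :
  #[d]%g = n'.+2 -> d *+ (i + 1)%R = d *+ i + d.
Proof.
move=> d_order; rewrite -mulrSr -!zmodXgE -[RHS]expg_mod_order d_order /=.
by rewrite modnDmr addn1.
Qed.

Section NonSquares.
Local Open Scope group_scope.

Lemma exists_nonsquare (gT : finGroupType) :
  ~~ odd #|gT| -> exists q : gT, forall y, y * y != q.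
Proof.
move=> even_gT; have even_setT : (2 %| #|[set: gT]|)%N by rewrite cardsT dvdn2.
have [z _ oz] := Cauchy (isT : prime 2) even_setT.
suff /forallPn[q /existsPn no_sq] : ~~ [forall q : gT, [exists y, y * y == q]].
  by exists q.
apply/negP => /forallP all_sq.
have sq_inj : {in [set: gT] &, injective (fun y => y * y)}.
  apply/imset_injP; rewrite [imset _ _](_ : _ = [set: gT]) //.
  apply/setP => q; rewrite inE; have /existsP[y /eqP <-] := all_sq q.
  by apply/imsetP; exists y.
have z1 : z = 1 by apply: sq_inj; rewrite ?inE // mulg1 -expg2 -oz expg_order.
by move: oz; rewrite z1 order1.
Qed.

Lemma exists_coset_without_squares (gT : finGroupType) (H : {group gT}) :
  H <| [set: gT] -> ~~ odd #|[set: gT] : H| ->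
  exists w : gT, forall x, x * x \notin H :* w.
Proof.
move=> nsH even_index; have NH x : x \in 'N(H) := subsetP (normal_norm nsH) x (in_setT x).
have [q no_sq] : exists q : coset_of H, forall y, y * y != q.
  by apply: exists_nonsquare; rewrite -cardsT -quotientT card_quotient ?normal_norm.
have [w _ qw] := cosetP q; exists w => x; rewrite qw in no_sq.
apply: contra (no_sq (coset H x)) => /(rcoset_kercosetP (NH _) (NH _)) <-.
by rewrite coset_morphM ?NH.
Qed.

End NonSquares.

Lemma exists_nonsquare_mod_cycle (G : finZmodType) (d : G) n c :
  #[d]%g = n -> #|G| = (2 * n * c)%N -> exists w : G, forall z : G, z *+ 2 - w \notin <[d]>%g.
Proof.
move=> d_order card_G; have n_gt0 : (0 < n)%N by rewrite -d_order order_gt0.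
have nsH : (<[d]> <| [set: G])%g by rewrite -sub_abelian_normal ?subsetT ?zmod_abelian.
have even_index : ~~ odd #|[set: G] : <[d]>|%g.
  rewrite -divgS ?subsetT // cardsT card_G -[#|<[d]>%g|]/(#[d]%g) d_order.
  by rewrite mulnAC mulnK // oddM.
have [w w_nsq] := exists_coset_without_squares nsH even_index.
by exists w => z; rewrite -rcoset_zmodE mulr2n; apply: w_nsq.
Qed.

Lemma card_bigcup_le (I T : finType) (A : {pred I}) (F : I -> {set T}) m :
  (forall i, #|F i| <= m)%N -> (#|\bigcup_(i in A) F i| <= #|A| * m)%N.
Proof.
move=> leFm; rewrite -sum_nat_const; elim/big_rec2: _ => [|i U v _ leUv].
  by rewrite cards0.
exact: leq_trans (leq_card_setU _ _) (leq_add (leFm i) leUv).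
Qed.

Section Classes.
Variables (T : finType) (B : T -> {set T}).
Hypothesis B_refl : forall x, x \in B x.
Hypothesis B_eq : forall x y, y \in B x -> B y = B x.

Lemma disjoint_classes x y : y \notin B x -> [disjoint B x & B y].
Proof.
move=> yNBx; rewrite disjoint_subset; apply/subsetP => g gx; rewrite !inE.
by apply: contra yNBx => gy; rewrite -(B_eq gx) (B_eq gy).
Qed.

Lemma exists_disjoint_classes m k :
  (forall x, #|B x| <= m)%N -> (0 < m)%N -> (k * m <= #|T|)%N ->
  exists2 S : {set T}, #|S| = k & {in S &, forall x y, x != y -> [disjoint B x & B y]}.
Proof.
move=> le_Bm m_gt0; elim: k => [_ | k IHk le_km].
  by exists set0 => [|x]; rewrite ?cards0 ?inE.
have lt_km : (k * m < #|T|)%N by apply: leq_trans _ le_km; rewrite ltn_mul2r m_gt0 /=.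
have [S card_S S_disj] := IHk (ltnW lt_km).
have [y yNU] : exists y, y \notin \bigcup_(x in S) B x.
  apply/existsP; rewrite -negb_forall; apply: contraTN lt_km => /forallP U_full.
  rewrite -leqNgt -card_S; apply: leq_trans (card_bigcup_le _ le_Bm).
  by apply/subset_leq_card/subsetP => z _; apply: U_full.
have yNB x : x \in S -> y \notin B x.
  by move=> xS; apply: contra yNU => yBx; apply/bigcupP; exists x.
have yNS : y \notin S by apply/negP => /yNB; rewrite B_refl.
exists (y |: S); first by rewrite cardsU1 yNS card_S.
move=> x1 x2 /setU1P[-> | x1S] /setU1P[-> | x2S]; rewrite ?eqxx // => neq_x12.
- by rewrite disjoint_sym; apply/disjoint_classes/yNB.
- exact/disjoint_classes/yNB.
- exact: S_disj.
Qed.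

End Classes.

Section CyclicIndices.
Variable n' : nat.
Local Notation n := n'.+2.
Implicit Types i j t : 'I_n.

Lemma inZp_ord t : inZp t = t.
Proof. by apply: val_inj; rewrite /= modn_small. Qed.

Lemma inZpS k : inZp k.+1 = inZp k + 1 :> 'I_n.
Proof. by apply: val_inj; rewrite /= modnDml [(1 %% n)%N]modn_small // addn1. Qed.

Lemma addr1_neq i : (i + 1 == i) = false.
Proof. by apply/negbTE; rewrite -subr_eq0 addrC addKr oner_eq0. Qed.

Lemma on_diagE i j l : on_diag i j l = (j == i + inZp l).
Proof.
rewrite /on_diag -val_eqE /= modnDmr -(eqn_modDl i) addnBA; last first.
  by rewrite ltnW // ltn_addl.
by rewrite addnC addnK modnDr [(j %% n)%N]modn_small.
Qed.

Lemma on_two_diagsE i j t :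
  [exists s : 'I_2, on_diag i j (t + s)] = (j == i + t) || (j == i + t + 1).
Proof.
apply/existsP/orP => [[[[|[|s]] //= _]]|].
- by rewrite on_diagE addn0 inZp_ord; left.
- by rewrite on_diagE addn1 inZpS inZp_ord addrA; right.
case=> h; [exists ord0 | exists ord_max];
  by rewrite on_diagE /= ?addn0 ?addn1 ?inZpS inZp_ord ?addrA.
Qed.

End CyclicIndices.

Lemma sum_odflt_support (I : finType) (G : zmodType) (F : I -> option G) :
  \sum_k odflt 0 (F k) = \sum_(k in [set k | F k != None]) odflt 0 (F k).
Proof.
by rewrite [RHS]big_mkcond; apply: eq_bigr => k _; rewrite inE; case: (F k).
Qed.

Lemma sum_set2 (I : finType) (G : zmodType) (F : I -> G) p q : p != q ->
  \sum_(k in [set p; q]) F k = F p + F q.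
Proof. by move=> pq; rewrite big_setU1 ?inE // big_set1. Qed.

Section TwoDiagonalArray.
Variables (n' : nat) (G : zmodType).
Local Notation n := n'.+2.
Variables (M : 'I_n -> 'I_n -> option G) (t : 'I_n).
Hypothesis M_support : forall i j, isSome (M i j) = (j == i + t) || (j == i + t + 1).

Lemma row_support i : [set j | M i j != None] = [set i + t; i + t + 1].
Proof. by apply/setP => j; rewrite !inE -M_support; case: (M i j). Qed.

Lemma col_support j : [set i | M i j != None] = [set j - t; j - t - 1].
Proof.
apply/setP => i; rewrite !inE !(eq_sym i) !subr_eq addrAC.
by rewrite -M_support; case: (M i j).
Qed.

Lemma card_row_support i : #|[set j | M i j != None]| = 2.
Proof. by rewrite row_support cards2 eq_sym addr1_neq. Qed.

Lemma card_col_support j : #|[set i | M i j != None]| = 2.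
Proof. by rewrite col_support cards2 eq_sym subr_eq eq_sym addr1_neq. Qed.

Lemma row_sum i :
  \sum_j odflt 0 (M i j) = odflt 0 (M i (i + t)) + odflt 0 (M i (i + t + 1)).
Proof. by rewrite sum_odflt_support row_support sum_set2 // eq_sym addr1_neq. Qed.

Lemma col_sum j :
  \sum_i odflt 0 (M i j) = odflt 0 (M (j - t) j) + odflt 0 (M (j - t - 1) j).
Proof.
by rewrite sum_odflt_support col_support sum_set2 // eq_sym subr_eq eq_sym addr1_neq.
Qed.

End TwoDiagonalArray.

Section DiagonalMagicArray.
Variables (n' : nat) (G : finZmodType).
Local Notation n := n'.+2.
Variables (M : 'I_n -> 'I_n -> option G) (t : 'I_n) (omega delta : G).
Hypothesis M_support : forall i j, isSome (M i j) = (j == i + t) || (j == i + t + 1).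
Hypothesis M_rows : forall i, \sum_j odflt 0 (M i j) = omega.
Hypothesis M_cols : forall j, \sum_i odflt 0 (M i j) = delta.
Hypothesis M_distinct : forall i i' j j' g, M i j = Some g -> M i' j' = Some g -> i = i'.

Let X i := odflt 0 (M i (i + t)).

Lemma diag_entry i : M i (i + t) = Some (X i).
Proof. by move: (M_support i (i + t)); rewrite eqxx /X; case: (M i _). Qed.

Lemma diag_entry_succ i : X (i + 1) = X i + (delta - omega).
Proof.
have row : X i + odflt 0 (M i (i + t + 1)) = omega by rewrite -(M_rows i) (row_sum M_support).
have col : X (i + 1) + odflt 0 (M i (i + t + 1)) = delta.
  by rewrite -(M_cols (i + t + 1)) (col_sum M_support) (addrAC i t 1) !addrK.
by rewrite -row -col (addrC (X i) (odflt 0 _)) addrKA subrKC.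
Qed.

Lemma diag_entry_inZp k : X (inZp k) = X 0 + (delta - omega) *+ k.
Proof.
elim: k => [|k IHk]; first by rewrite mulr0n addr0; congr X; apply: val_inj.
by rewrite inZpS diag_entry_succ IHk mulrSr !addrA.
Qed.

Lemma order_magic_sum_diff : #[delta - omega]%g = n.
Proof.
apply/order_zmodP => //; split=> [|i j eq_ij].
  apply: (@addrI _ (X 0)); rewrite -diag_entry_inZp addr0; congr X.
  by apply: val_inj; rewrite /= modnn.
have X_ij : X (inZp i) = X (inZp j) by rewrite !diag_entry_inZp eq_ij.
rewrite -[i]inZp_ord -[j]inZp_ord; apply: M_distinct (diag_entry _).
by rewrite -X_ij; apply: diag_entry.
Qed.

End DiagonalMagicArray.

Lemma exists_order_of_diagonal_MRS n' c (G : finZmodType) (A : arrays G n'.+2 n'.+2 c) :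
  (0 < c)%N -> @is_MRS_sq G n'.+2 2 c A -> @is_diagonal G n'.+2 2 c A ->
  exists x : G, #[x]%g = n'.+2.
Proof.
move=> c_gt0 [once [_ [_ [omega [delta [rows cols]]]]]] diag.
pose a := Ordinal c_gt0; have [t At] := diag a.
exists (delta - omega); apply: (@order_magic_sum_diff _ _ (A a) t) => //.
  by move=> i j; rewrite At on_two_diagsE.
move=> i i' j j' g Aij Ai'j'.
have /card_le1_eqP/(_ (a, i, j) (a, i', j')) :
    (#|[set x | A x.1.1 x.1.2 x.2 == Some g]| <= 1)%N by rewrite once.
by rewrite !inE /= Aij Ai'j' eqxx => /(_ isT isT) [].
Qed.

Section Blocks.
Variables (G : finZmodType) (d w : G).
Hypothesis w_nonsquare : forall z : G, z *+ 2 - w \notin <[d]>%g.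

Definition block x : {set G} := (<[d]> :* x :|: <[d]> :* (w - x))%g.

Lemma mem_block x : x \in block x.
Proof. by rewrite inE rcoset_refl. Qed.

Lemma block_eq x y : y \in block x -> block y = block x.
Proof.
rewrite /block !inE => /orP[yx | ywx].
  rewrite (rcoset_eqP yx); congr (_ :|: _); apply/rcoset_eqP.
  by rewrite rcoset_zmodE opprB addrC subrKA -opprB groupN_zmod -rcoset_zmodE.
rewrite (rcoset_eqP ywx) setUC; congr (_ :|: _); apply/rcoset_eqP.
by rewrite rcoset_zmodE addrAC -opprB groupN_zmod -rcoset_zmodE.
Qed.

Lemma card_block x : (#|block x| <= 2 * #[d]%g)%N.
Proof. by rewrite (leq_trans (leq_card_setU _ _)) // !card_rcoset mul2n addnn. Qed.

Variable n : nat.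
Hypothesis d_order : #[d]%g = n.

Let n_gt0 : (0 < n)%N. Proof. by rewrite -d_order order_gt0. Qed.

Definition block_elt x (p : 'I_n * bool) : G :=
  if p.2 then w - x - d *+ p.1 else x + d *+ p.1.

Lemma block_elt_mem x p : block_elt x p \in block x.
Proof.
case: p => i [|]; rewrite /block_elt !inE !rcoset_zmodE /=.
  by rewrite orbC addrAC subrr add0r groupN_zmod mulrn_cycle.
by rewrite addrAC subrr add0r mulrn_cycle.
Qed.

Lemma block_halves_neq x i j : x + d *+ i != w - x - d *+ j.
Proof.
apply: contraNneq (w_nonsquare x) => e.
have -> : x *+ 2 - w = - (d *+ i + d *+ j).
  by apply/eqP; rewrite -subr_eq0 opprK mulr2n addrAC addrACA e -(addrA w) -opprD subrK subrr.
by rewrite groupN_zmod groupD_zmod ?mulrn_cycle.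
Qed.

Lemma block_elt_inj x : injective (block_elt x).
Proof.
have [_ d_inj] := (order_zmodP d n_gt0).1 d_order.
move=> [i [|]] [j [|]]; rewrite /block_elt /= => e.
- by rewrite (d_inj i j) //; apply/oppr_inj/(addrI (w - x)).
- by have := block_halves_neq x j i; rewrite e eqxx.
- by have := block_halves_neq x i j; rewrite e eqxx.
- by rewrite (d_inj i j) //; apply/(addrI x).
Qed.

Lemma block_elt_sum x i : block_elt x (i, false) + block_elt x (i, true) = w.
Proof. by rewrite /block_elt /= -(addrA w) -opprD subrKC. Qed.

Variable c : nat.
Hypothesis card_G : #|G| = (2 * n * c)%N.

Lemma exists_block_transversal :
  exists x : 'I_c -> G, bijective (fun p : 'I_c * ('I_n * bool) => block_elt (x p.1) p.2).
Proof.
have le_block x : (#|block x| <= 2 * n)%N by rewrite -d_order card_block.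
have m_gt0 : (0 < 2 * n)%N by rewrite muln_gt0 n_gt0.
have le_cn : (c * (2 * n) <= #|G|)%N by rewrite card_G mulnC.
have [S card_S S_disj] :=
  exists_disjoint_classes mem_block block_eq le_block m_gt0 le_cn.
pose x (a : 'I_c) := nth 0 (enum S) a.
have size_S : size (enum S) = c by rewrite -cardE card_S.
have x_S a : x a \in S by rewrite -mem_enum mem_nth ?size_S.
exists x; apply: inj_card_bij => [[a p] [b q] /= e|]; last first.
  by rewrite card_G !card_prod !card_ord card_bool mulnC (mulnC n 2).
have x_ab : x a = x b.
  apply/eqP; apply: contraT => ne_x.
  have := disjointFr (S_disj _ _ (x_S a) (x_S b) ne_x) (block_elt_mem _ p).
  by rewrite e block_elt_mem.
have a_b : a = b.
  apply/val_inj/eqP; rewrite -(@nth_uniq _ 0 (enum S)) ?size_S ?enum_uniq ?ltn_ord //.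
  exact/eqP.
by move: e; rewrite x_ab a_b => /block_elt_inj ->.
Qed.

End Blocks.

Lemma block_elt_pred_sum (G : finZmodType) (d w x : G) n' (j : 'I_n'.+2) :
  #[d]%g = n'.+2 -> block_elt d w x (j, false) + block_elt d w x (j - 1, true) = w + d.
Proof.
move=> d_order; change (x + d *+ j + (w - x - d *+ (j - 1)%R) = w + d).
by rewrite -{1}(subrK 1 j) mulrn_ordS // -(addrA w) -opprD (addrA x) (addrAC (x + _) d) subrKC.
Qed.

Section PairedArray.
Variables (n' c : nat) (G : finZmodType).
Local Notation n := n'.+2.
Variable f : 'I_c * ('I_n * bool) -> G.

Definition paired_array : arrays G n n c := fun a i j =>
  if j == i then Some (f (a, (i, false)))
  else if j == i + 1 then Some (f (a, (i, true))) else None.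

Definition paired_cell (p : 'I_c * ('I_n * bool)) : 'I_c * 'I_n * 'I_n :=
  (p.1, p.2.1, if p.2.2 then p.2.1 + 1 else p.2.1).

(* Stated with t = 0 so that the lemmas on arrays supported on two diagonals
   apply verbatim. *)
Lemma paired_array_support a i j :
  isSome (paired_array a i j) = (j == i + 0) || (j == i + 0 + 1).
Proof. by rewrite addr0 /paired_array; case: eqP; case: eqP. Qed.

Lemma paired_array_cell p :
  paired_array (paired_cell p).1.1 (paired_cell p).1.2 (paired_cell p).2 = Some (f p).
Proof. by case: p => a [i [|]]; rewrite /paired_array /= ?addr1_neq eqxx. Qed.

Lemma paired_arrayP a i j g :
  paired_array a i j = Some g -> exists2 p, (a, i, j) = paired_cell p & f p = g.
Proof.
rewrite /paired_array; case: eqP => [-> [<-] | _]; first by exists (a, (i, false)).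
by case: eqP => [-> [<-] | //]; exists (a, (i, true)).
Qed.

Lemma paired_array_once g : bijective f ->
  #|[set z | paired_array z.1.1 z.1.2 z.2 == Some g]| = 1.
Proof.
case=> f_inv fK f_invK; apply/eqP/cards1P; exists (paired_cell (f_inv g)).
apply/setP => -[[a i] j]; rewrite !inE; apply/eqP/eqP => [/paired_arrayP[p -> <-] | ->].
  by rewrite fK.
by rewrite paired_array_cell f_invK.
Qed.

Lemma paired_array_row_sum a i :
  \sum_j odflt 0 (paired_array a i j) = f (a, (i, false)) + f (a, (i, true)).
Proof.
by rewrite (row_sum (paired_array_support a)) !addr0 /paired_array eqxx addr1_neq eqxx.
Qed.

Lemma paired_array_col_sum a j :
  \sum_i odflt 0 (paired_array a i j) = f (a, (j, false)) + f (a, (j - 1, true)).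
Proof.
rewrite (col_sum (paired_array_support a)) !subr0 /paired_array eqxx subrK eqxx.
by rewrite eq_sym subr_eq eq_sym addr1_neq.
Qed.

Lemma paired_array_MRS omega delta : bijective f ->
  (forall a i, f (a, (i, false)) + f (a, (i, true)) = omega) ->
  (forall a j, f (a, (j, false)) + f (a, (j - 1, true)) = delta) ->
  @is_MRS_sq G n 2 c paired_array /\ @is_diagonal G n 2 c paired_array.
Proof.
move=> f_bij rows cols; split; last first.
  by move=> a; exists 0 => i j; rewrite on_two_diagsE paired_array_support.
split; first by move=> g; apply: paired_array_once.
split; first by move=> a; apply: card_row_support (paired_array_support a).
split; first by move=> a; apply: card_col_support (paired_array_support a).
by exists omega, delta; split=> a k; rewrite ?paired_array_row_sum ?paired_array_col_sum.
Qed.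

End PairedArray.

Lemma diagonal_MRS_of_order n' c (G : finZmodType) (d : G) :
  #[d]%g = n'.+2 -> #|G| = (2 * n'.+2 * c)%N ->
  exists A : arrays G n'.+2 n'.+2 c, @is_MRS_sq G n'.+2 2 c A /\ @is_diagonal G n'.+2 2 c A.
Proof.
move=> d_order card_G; have [w w_nsq] := exists_nonsquare_mod_cycle d_order card_G.
have [x f_bij] := exists_block_transversal w_nsq d_order card_G.
exists (paired_array (fun p => block_elt d w (x p.1) p.2)).
apply: paired_array_MRS f_bij _ _ => a i.
  exact: block_elt_sum.
exact: block_elt_pred_sum.
Qed.

Theorem theorem5p5 (n c : nat) (G : finZmodType) :
  (2 <= n)%N -> (1 <= c)%N -> #|G| = (2 * n * c)%N ->
  (exists A : arrays G n n c, @is_MRS_sq G n 2 c A /\ @is_diagonal G n 2 c A)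
  <-> (exists x : G, #[x]%g = n).
Proof.
case: n => [|[|n']] // _ c_gt0 card_G; split.
  by case=> A [A_MRS A_diag]; apply: exists_order_of_diagonal_MRS c_gt0 A_MRS A_diag.
by case=> d d_order; apply: diagonal_MRS_of_order d_order card_G.
Qed.
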